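(* Let $G$ be a $6$-regular graph, $\mathcal S$ a canonical path partition of $G$, $P$ a path component, and $X=x_1x_2\cdots x_k$ ($k\ge 2$) a sequence of consecutive vertices of $P$, all belonging to $V_2^b$. Let $X'\subseteq X$ be the set of vertices of $X$ that go to at least one vertex of a cycle component. If $|X'|\ge 2$, then the vertices of $X'$ are consecutive on $P$, there is a single cycle component $C$ such that every cycle-component vertex that any vertex of $X'$ goes to lies in $C$, and, if $|V(C)|\le 6$, the number of balanced edges between $X'$ and $V(C)$ is at most $\frac{|X'|\cdot|V(C)|}{2}$.
   Context: All graphs are finite, simple and undirected. A path partition of $G=(V,E)$ is a set of vertex-disjoint paths (single vertices allowed) covering $V$; its members are components. A component with $t\ge3$ vertices is a cycle component if the subgraph induced on its vertex set has a spanning cycle; a one-vertex component is an isolated vertex; every other component is a path component. A path partition is canonical if (1) it has the minimum number of components among all path partitions of $G$; (2) among those, it has the maximum number of cycle components; (3) it has no isolated vertices. Given a canonical path partition $\mathcal S$ of $G$: two vertices are path neighbors if they are consecutive on a path component. An edge of $G$ is a free edge unless it joins two path neighbors or has both endpoints in the same cycle component. $V_1$ is the set of end-vertices of path components together with all vertices of cycle components. $V_2$ is the set of vertices not in $V_1$ that are joined by a free edge to a vertex of $V_1$. $V_2^b$ is the set of vertices of $V_2$ having at least one path neighbor in $V_2$. A balanced edge is a free edge with one endpoint in $V_1$ and the other in $V_2$; for $x\in V_2$, $y\in V_1$ we say $x$ goes to $y$ if $xy$ is a balanced edge. *)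

From mathcomp Require Import all_boot.
Set Implicit Arguments. Unset Strict Implicit. Unset Printing Implicit Defensive.

Section PathPartitions.
Variables (T : finType) (e : rel T).

Definition is_gpath (s : seq T) : bool :=
  if s is x :: s' then path e x s' else false.

Definition path_partition (S : seq (seq T)) : Prop :=
  all is_gpath S /\ uniq (flatten S) /\ (forall v : T, v \in flatten S).

Definition cycle_comp (s : seq T) : bool :=
  (2 < size s) && has (cycle e) (permutations s).

Definition isolated_comp (s : seq T) : bool := size s == 1.

Definition path_comp (s : seq T) : bool := (1 < size s) && ~~ cycle_comp s.

Definition ncycles (S : seq (seq T)) : nat := count cycle_comp S.

Definition canonical (S : seq (seq T)) : Prop :=
  [/\ path_partition S,
      (forall S', path_partition S' -> size S <= size S'),
      (forall S', path_partition S' -> size S' = size S -> ncycles S' <= ncycles S)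
    & ~~ has isolated_comp S].

Definition consec (s : seq T) (x y : T) : bool :=
  ((x, y) \in zip s (behead s)) || ((y, x) \in zip s (behead s)).

Variable S : seq (seq T).

Definition path_nb (x y : T) : bool := has (fun s => path_comp s && consec s x y) S.

Definition same_cycle_comp (x y : T) : bool :=
  has (fun s => [&& cycle_comp s, x \in s & y \in s]) S.

Definition in_cycle_comp (y : T) : bool := has (fun s => cycle_comp s && (y \in s)) S.

Definition free_edge (x y : T) : bool :=
  [&& e x y, ~~ path_nb x y & ~~ same_cycle_comp x y].

Definition V1 (x : T) : bool :=
  has (fun s => (path_comp s && ((x == head x s) || (x == last x s)))
                || (cycle_comp s && (x \in s))) S.

Definition V2 (x : T) : bool := ~~ V1 x && [exists y, V1 y && free_edge x y].

Definition V2b (x : T) : bool := V2 x && [exists y, path_nb x y && V2 y].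

Definition balanced (x y : T) : bool :=
  free_edge x y && ((V1 x && V2 y) || (V2 x && V1 y)).

Definition goes_to (x y : T) : bool := [&& V2 x, V1 y & balanced x y].

Definition Xprime (X : seq T) : {set T} :=
  [set x | (x \in X) && [exists y, goes_to x y && in_cycle_comp y]].

End PathPartitions.

From Stdlib Require Import ArithRing.
From mathcomp Require Import all_boot zify.
Set Implicit Arguments. Unset Strict Implicit. Unset Printing Implicit Defensive.

(* Every step is a rerouting argument: were it false, the path component P could be
   cut and its pieces reattached, through free edges, to cycle components or to ends
   of path components, giving a path partition with fewer components.
   - Between two vertices of X' there is no run of V2-vertices outside X': the free
     edges of the first and last vertex of the run lead to ends of path components,
     and every way these ends can lie allows a rerouting.  So X' is consecutive.
   - Two consecutive vertices of X' attached to different cycle components would let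
     each half of P absorb one of the cycles; so all targets lie in one cycle C.
   - Two consecutive vertices u, v of X' are never attached to two consecutive
     vertices of C: cutting that edge of C would let C be inserted between u and v.
     For |V(C)| <= 6 this bounds the pair of attachment counts of u and v, which is
     checked by enumeration, and summing along X' gives the bound. *)

Lemma head_rev (T : Type) (d : T) s : head d (rev s) = last d s.
Proof. by case/lastP: s => // s x; rewrite rev_rcons last_rcons. Qed.

Lemma last_rev (T : Type) (d : T) s : last d (rev s) = head d s.
Proof. by case: s => // x s; rewrite rev_cons last_rcons. Qed.

Lemma uniq_flatten_uniq (T : eqType) (L : seq (seq T)) :
  {in L, forall s, s != [::]} -> uniq (flatten L) -> uniq L.
Proof.
elim: L => [//|s L IHL] neL /=; rewrite cat_uniq => /and3P[_ disj uL].
rewrite IHL ?andbT // => [|t tL]; last by apply: neL; rewrite inE tL orbT.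
apply: contra disj => sL; case: s neL sL => [neL _|x s _ sL].
  by have := neL _ (mem_head _ _).
by apply/hasP; exists x; [apply/flattenP; exists (x :: s)|]; rewrite ?mem_head.
Qed.

Section GraphPaths.
Variables (T : finType) (e : rel T).
Hypothesis e_sym : symmetric e.
Local Notation gpath := (is_gpath e).

Lemma gpath_neq0 s : gpath s -> s != [::].
Proof. by case: s. Qed.

Lemma gpath_cat s1 s2 d :
  gpath s1 -> gpath s2 -> e (last d s1) (head d s2) -> gpath (s1 ++ s2).
Proof.
case: s1 => [//|x s1]; case: s2 => [//|z s2] /= g1 g2 xz.
by rewrite cat_path g1 /= xz g2.
Qed.

Lemma gpath_rev s : gpath s -> gpath (rev s).
Proof.
case: s => [//|x s] /= g; rewrite (lastI x s) rev_rcons /= rev_path.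
by rewrite (@eq_path _ _ e) // => a b /=; rewrite e_sym.
Qed.

Lemma gpath_infix s t : gpath s -> infix t s -> t != [::] -> gpath t.
Proof.
move=> + /infixP[u [v sE]]; rewrite {}sE; case: t => [//|x t] + _.
case: u => [|y u] /=; first by rewrite cat_path => /andP[].
by rewrite cat_path /= cat_path => /and3P[_ _ /andP[]].
Qed.

Definition path_end (s : seq T) (z : T) := (z == head z s) || (z == last z s).

Definition traversal_from (s : seq T) (z : T) :=
  exists N, perm_eq (z :: N) s /\ gpath (z :: N).

Lemma traversal_to s z : traversal_from s z ->
  exists N, perm_eq (rcons N z) s /\ gpath (rcons N z).
Proof.
case=> N [pN gN]; exists (rev N).
by rewrite -rev_cons perm_rev pN gpath_rev.
Qed.

Lemma gpath_end_traversal s z :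
  gpath s -> path_end s z -> traversal_from s z.
Proof.
case: s => [//|x s] g /orP[/eqP-> | /eqP zE]; first by exists s.
exists (rev (belast x s)); rewrite zE -rev_rcons -lastI perm_rev.
by split=> //; apply: gpath_rev.
Qed.

Lemma cycle_traversal H y : cycle e H -> y \in H -> traversal_from H y.
Proof.
move=> cH /rot_to[i N HE]; exists N; rewrite -HE perm_rot; split=> //.
by move: cH; rewrite -(rot_cycle i) HE /= rcons_path => /andP[].
Qed.

Lemma cycle_comp_traversal C y : cycle_comp e C -> y \in C -> traversal_from C y.
Proof.
case/andP=> _ /hasP[H]; rewrite mem_permutations => pH cH yC.
have [N [pN gN]] := cycle_traversal cH (etrans (perm_mem pH y) yC).
by exists N; rewrite (perm_trans pN pH).
Qed.

Lemma cycle_cut H y0 i : cycle e H -> i < size H ->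
  [/\ gpath (rot i.+1 H), head y0 (rot i.+1 H) = nth y0 H (i.+1 %% size H)
    & last y0 (rot i.+1 H) = nth y0 H i].
Proof.
move=> cH iH; have takeE : take i.+1 H = rcons (take i H) (nth y0 H i).
  by rewrite (take_nth y0).
split; last by rewrite /rot takeE last_cat last_rcons.
- have : rot i.+1 H != [::] by rewrite -size_eq0 size_rot -lt0n (leq_ltn_trans _ iH).
  move: cH; rewrite -(rot_cycle i.+1).
  by case: (rot i.+1 H) => [//|x s] /=; rewrite rcons_path => /andP[].
- rewrite /rot; case: (ltngtP i.+1 (size H)) => [lt | gt | iE].
  + by rewrite modn_small // (drop_nth y0 lt).
  + by move: gt; rewrite ltnNge iH.
  + by rewrite -iE modnn drop_oversize ?take_oversize ?iE // nth0.
Qed.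

Lemma path_comp_cycle_neq s t :
  path_comp e s -> cycle_comp e t -> s != t.
Proof. by case/andP=> _ ncs cct; apply: contraNneq ncs => ->. Qed.

End GraphPaths.

Section CanonicalPartition.
Variables (T : finType) (e : rel T).
Hypothesis e_sym : symmetric e.
Variable S : seq (seq T).
Hypothesis canS : canonical e S.
Local Notation gpath := (is_gpath e).

Lemma canonical_gpath s : s \in S -> gpath s.
Proof. by case: canS => [[/allP gS _] _ _ _]; apply: gS. Qed.

Lemma canonical_uniq_flatten : uniq (flatten S).
Proof. by case: canS => [[_ []]]. Qed.

Lemma canonical_uniq : uniq S.
Proof.
by apply: uniq_flatten_uniq canonical_uniq_flatten => s /canonical_gpath /gpath_neq0.
Qed.

Lemma perm_comps_split Old : uniq Old -> {subset Old <= S} ->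
  perm_eq S (Old ++ [seq s <- S | s \notin Old]).
Proof.
move=> uOld OldS; rewrite -{1}(perm_filterC (mem Old) S) perm_cat2r.
apply: uniq_perm; rewrite ?filter_uniq ?canonical_uniq // => s.
by rewrite mem_filter; apply/andP/idP => [[]//|sOld]; split=> //; apply: OldS.
Qed.

Lemma canonical_comp_uniq s : s \in S -> uniq s.
Proof.
move=> sS; have := canonical_uniq_flatten.
rewrite (perm_uniq (perm_flatten (@perm_comps_split [:: s] _ _))) //=.
  by rewrite cat_uniq => /andP[].
by move=> t; rewrite inE => /eqP->.
Qed.

Lemma canonical_reroute Old New : uniq Old -> {subset Old <= S} ->
  all gpath New -> perm_eq (flatten New) (flatten Old) -> size Old <= size New.
Proof.
move=> uOld OldS gNew pNew; set R := [seq s <- S | s \notin Old].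
have pS := perm_comps_split uOld OldS.
case: canS => [[gS [uS covS]] minS _ _].
have pNewS : perm_eq (flatten (New ++ R)) (flatten S).
  rewrite perm_sym; apply: perm_trans (perm_flatten pS) _.
  by rewrite !flatten_cat perm_cat2r perm_sym.
have ppNew : path_partition e (New ++ R).
  split; last by split=> [|v]; rewrite (perm_uniq pNewS, perm_mem pNewS).
  rewrite all_cat gNew; apply/allP => s.
  by rewrite mem_filter => /andP[_ /(allP gS)].
by have := minS _ ppNew; rewrite (perm_size pS) !size_cat leq_add2r.
Qed.

Lemma no_path_cover2 C D N : C \in S -> D \in S -> C != D ->
  gpath N -> perm_eq N (C ++ D) -> False.
Proof.
move=> CS DS CD gN pN.
suff: size [:: C; D] <= size [:: N] by [].
apply: canonical_reroute; rewrite /= ?inE ?CD ?gN ?cats0 //.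
by move=> s; rewrite !inE => /orP[]/eqP->.
Qed.

Lemma no_path_cover3 C D D' N N' : C \in S -> D \in S -> D' \in S ->
  uniq [:: C; D; D'] -> gpath N -> gpath N' -> perm_eq (N ++ N') (C ++ D ++ D') ->
  False.
Proof.
move=> CS DS D'S uCD gN gN' pN.
suff: size [:: C; D; D'] <= size [:: N; N'] by [].
apply: canonical_reroute; rewrite /= ?gN ?gN' ?cats0 //.
by move=> s; rewrite !inE => /or3P[]/eqP->.
Qed.

Lemma path_end_traversal s z : s \in S -> path_end s z -> traversal_from e s z.
Proof. by move=> sS; apply: gpath_end_traversal (canonical_gpath sS). Qed.

End CanonicalPartition.

Section VertexClasses.
Variables (T : finType) (e : rel T) (S : seq (seq T)).

Definition goes_to_cycle (x : T) :=
  [exists y, goes_to e S x y && in_cycle_comp e S y].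

Definition touches (x : T) (C : seq T) := [&& C \in S, cycle_comp e C & has (e x) C].

Lemma mem_Xprime X x : (x \in Xprime e S X) = (x \in X) && goes_to_cycle x.
Proof. by rewrite inE. Qed.

Lemma goes_to_adj x y : goes_to e S x y -> e x y.
Proof. by case/and3P=> _ _ /andP[/and3P[]]. Qed.

Lemma goes_to_cycle_V2 x : goes_to_cycle x -> V2 e S x.
Proof. by case/existsP=> y /andP[/and3P[]]. Qed.

Lemma goes_to_touches x y : goes_to e S x y -> in_cycle_comp e S y ->
  exists2 C, touches x C & y \in C.
Proof.
move=> xy /hasP[C CS /andP[cC yC]]; exists C => //.
by rewrite /touches CS cC; apply/hasP; exists y => //; apply: goes_to_adj.
Qed.

Lemma goes_to_cycle_touches x : goes_to_cycle x -> exists C, touches x C.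
Proof.
by case/existsP=> y /andP[xy /(goes_to_touches xy)[C xC _]]; exists C.
Qed.

Lemma touches_traversal x C : touches x C -> exists2 y, traversal_from e C y & e x y.
Proof.
case/and3P=> _ cC /hasP[y yC xy]; exists y => //.
exact: cycle_comp_traversal.
Qed.

Lemma path_end_V1 s x : s \in S -> path_comp e s -> path_end s x -> V1 e S x.
Proof. by move=> sS ps xs; apply/hasP; exists s => //; apply/orP; left; apply/andP. Qed.

Lemma V2_path_end_neighbor x : V2 e S x -> ~~ goes_to_cycle x ->
  exists z s, [/\ s \in S, path_comp e s, path_end s z & e x z].
Proof.
move=> V2x; have /andP[_ /existsP[z /andP[V1z fr]]] := V2x.
have xz : e x z by case/and3P: fr.
case/hasP: (V1z) => s sS /orP[/andP[ps zs] _ | /andP[cs zs]]; first by exists z, s.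
case/existsP; exists z; rewrite /goes_to V2x V1z /balanced fr V2x V1z orbT /=.
by apply/hasP; exists s; rewrite ?cs.
Qed.

End VertexClasses.

Lemma card_rel_pairs (T : finType) (r : rel T) (X Y : seq T) : uniq X -> uniq Y ->
  #|[set p : T * T | [&& p.1 \in X, p.2 \in Y & r p.1 p.2]]| =
  \sum_(x <- X) count (r x) Y.
Proof.
move=> uX uY; rewrite -sum1_card.
rewrite (eq_bigl (fun p : T * T => (p.1 \in X) && ((p.2 \in Y) && r p.1 p.2))) => [|p];
  last by rewrite inE.
rewrite -(pair_big_dep (fun x => x \in X) (fun x y => (y \in Y) && r x y) (fun _ _ => 1)).
rewrite big_uniq //; apply: eq_bigr => x _; rewrite sum1_card -size_filter.
rewrite -(card_uniqP (filter_uniq _ uY)); apply: eq_card => y.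
by rewrite mem_filter andbC.
Qed.

(* The weighted bounds serve segments of length three, for which their sum gives
   2 (w u + w v + w z) <= 3 c. *)
Lemma sum_adjacent_bound (A : Type) (w : A -> nat) c (Y : seq A) : 2 <= size Y ->
  (forall Y1 u v Y2, Y = Y1 ++ u :: v :: Y2 ->
     [/\ w u + w v <= c, 4 * w u + 2 * w v <= 3 * c & 4 * w v + 2 * w u <= 3 * c]) ->
  2 * (\sum_(x <- Y) w x) <= size Y * c.
Proof.
move: (leqnn (size Y)); move: {2}(size Y) => n.
elim: n Y => [|n IHn] [|u [|v [|z [|z' Y]]]] //= sY _ adj; rewrite !big_cons ?big_nil.
- by have [] := adj [::] u v [::] erefl; lia.
- have [_ ? ?] := adj [::] u v [:: z] erefl.
  by have [_ ? ?] := adj [:: u] v z [::] erefl; lia.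
have [uv _ _] := adj [::] u v [:: z, z' & Y] erefl.
have IH : 2 * (w z + (w z' + \sum_(x <- Y) w x)) <= (size Y).+2 * c.
  have := IHn [:: z, z' & Y]; rewrite !big_cons; apply=> // [|Y1 a b Y2 E].
    by move: sY => /=; lia.
  by apply: (adj [:: u, v & Y1]); rewrite E.
lia.
Qed.

Fixpoint sublists (A : Type) (s : seq A) : seq (seq A) :=
  if s is x :: s' then sublists s' ++ map (cons x) (sublists s') else [:: [::]].

Lemma filter_sublists (A : eqType) (p : pred A) s : filter p s \in sublists s.
Proof.
elim: s => [|x s IHs] /=; first by rewrite inE.
by case: (p x); rewrite mem_cat ?IHs // map_f ?orbT.
Qed.

Definition cyclic_nonadjacent n (I J : seq nat) :=
  all (fun i => all (fun j => (i.+1 %% n != j) && (j.+1 %% n != i)) J) I.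

Lemma small_cycle_nonadjacent_bound n I J : 3 <= n <= 6 ->
  I \in sublists (iota 0 n) -> J \in sublists (iota 0 n) ->
  cyclic_nonadjacent n I J -> I != [::] -> J != [::] ->
  [&& size I + size J <= n, 4 * size I + 2 * size J <= 3 * n
    & 4 * size J + 2 * size I <= 3 * n].
Proof.
move=> n36 In Jn.
have check : all (fun I : seq nat => all (fun J : seq nat =>
    [==> cyclic_nonadjacent n I J, I != [::], J != [::] =>
     [&& size I + size J <= n, 4 * size I + 2 * size J <= 3 * n
       & 4 * size J + 2 * size I <= 3 * n]])
    (sublists (iota 0 n))) (sublists (iota 0 n)).
  by case: n n36 {In Jn} => [|[|[|[|[|[|[|n]]]]]]] // _; vm_compute.
by move: (allP (allP check I In) J Jn) => /implyP/[apply]/implyP/[apply]/implyP.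
Qed.

Ltac count_arith := rewrite -?cats1 -?cat_cons ?(count_cat, count_rev) /= -!plusE; ring.

Section PathComponent.
Variables (T : finType) (e : rel T).
Hypothesis e_sym : symmetric e.
Variable S : seq (seq T).
Hypothesis canS : canonical e S.
Variable P : seq T.
Hypotheses (PS : P \in S) (Ppath : path_comp e P).
Local Notation gpath := (is_gpath e).

Lemma gpath_infixP u : infix u P -> u != [::] -> gpath u.
Proof. exact: gpath_infix (canonical_gpath canS PS). Qed.

Lemma gpath_prefix L u R : P = L ++ u :: R -> gpath (rcons L u).
Proof.
move=> PE; apply: gpath_infixP; last by case: L {PE}.
by apply/infixP; exists [::], R; rewrite PE cat_rcons.
Qed.

Lemma gpath_suffix L v R : P = L ++ v :: R -> gpath (v :: R).
Proof. by move=> PE; apply: gpath_infixP; rewrite // PE suffix_infix. Qed.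

Lemma no_double_attachment L u v R D D' y y' : P = L ++ u :: v :: R ->
  D \in S -> D' \in S -> uniq [:: P; D; D'] ->
  traversal_from e D y -> e u y -> traversal_from e D' y' -> e v y' -> False.
Proof.
move=> PE DS D'S uPD [N [pN gN]] uy /(traversal_to e_sym)[N' [pN' gN']] vy'.
apply: (no_path_cover3 canS PS DS D'S uPD (N := rcons L u ++ y :: N)
                                         (N' := rcons N' y' ++ v :: R)).
- by apply: (gpath_cat (d := u) (gpath_prefix PE) gN); rewrite last_rcons.
- have PE' : P = rcons L u ++ v :: R by rewrite PE cat_rcons.
  by apply: (gpath_cat (d := u) gN' (gpath_suffix PE')); rewrite last_rcons /= e_sym.
- by apply/permP => q; rewrite PE !count_cat -(permP pN) -(permP pN'); count_arith.
Qed.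

Lemma no_insertion L u v R D N d : P = L ++ u :: v :: R ->
  D \in S -> P != D -> perm_eq N D -> gpath N ->
  e u (head d N) -> e v (last d N) -> False.
Proof.
case: N => [//|y N] PE DS PD pN gN /= uy vN.
have PE' : P = rcons L u ++ v :: R by rewrite PE cat_rcons.
pose N' := (rcons L u ++ y :: N) ++ v :: R.
apply: (no_path_cover2 canS PS DS PD (N := N')).
- apply: (gpath_cat (d := u) _ (gpath_suffix PE')).
    by apply: (gpath_cat (d := u) (gpath_prefix PE) gN); rewrite last_rcons.
  by rewrite last_cat last_rcons /= e_sym.
- by apply/permP => q; rewrite /N' PE count_cat -(permP pN); count_arith.
Qed.

Lemma no_head_closure l L u v R D y : P = l :: L ++ u :: v :: R ->
  D \in S -> P != D -> traversal_from e D y -> e u y -> e l v -> False.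
Proof.
move=> PE DS PD /(traversal_to e_sym)[N [pN gN]] uy lv.
have PE' : P = rcons (l :: L) u ++ v :: R by rewrite PE cat_rcons.
pose N' := (rcons N y ++ rev (rcons (l :: L) u)) ++ v :: R.
apply: (no_path_cover2 canS PS DS PD (N := N')).
- apply: (gpath_cat (d := u) _ (gpath_suffix PE')).
    apply: (gpath_cat (d := u) gN).
      exact: (gpath_rev e_sym (gpath_prefix (PE : P = (l :: L) ++ _))).
    by rewrite last_rcons rev_rcons /= e_sym.
  by rewrite last_cat rev_rcons /= rev_cons last_rcons.
- by apply/permP => q; rewrite /N' PE count_cat -(permP pN); count_arith.
Qed.

Lemma no_tail_closure L u v R r D y : P = L ++ u :: v :: rcons R r ->
  D \in S -> P != D -> traversal_from e D y -> e v y -> e u r -> False.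
Proof.
move=> PE DS PD [N [pN gN]] vy ur.
have PE' : P = rcons L u ++ v :: rcons R r by rewrite PE cat_rcons.
pose N' := (rcons L u ++ rev (v :: rcons R r)) ++ y :: N.
apply: (no_path_cover2 canS PS DS PD (N := N')).
- apply: (gpath_cat (d := u) _ gN).
    apply: (gpath_cat (d := u) (gpath_prefix PE)).
      exact: (gpath_rev e_sym (gpath_suffix PE')).
    by rewrite last_rcons rev_cons rev_rcons.
  by rewrite last_cat rev_cons last_rcons.
- by apply/permP => q; rewrite /N' PE count_cat -(permP pN); count_arith.
Qed.

Lemma no_double_closure l L u g G R r D y : P = l :: L ++ u :: g :: G ++ rcons R r ->
  D \in S -> P != D -> traversal_from e D y -> e u y ->
  e l (last g G) -> e g r -> False.
Proof.
move=> PE DS PD /(traversal_to e_sym)[N [pN gN]] uy lG gr.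
have gG : gpath (g :: G).
  apply: gpath_infixP => //; apply/infixP; exists (rcons (l :: L) u), (rcons R r).
  by rewrite PE cat_rcons.
have gR : gpath (rcons R r).
  apply: gpath_infixP; last by case: (R).
  apply/infixP; exists (l :: L ++ u :: g :: G), [::].
  by rewrite PE cats0 /= -catA.
pose N' := ((rcons N y ++ rev (rcons (l :: L) u)) ++ rev (g :: G)) ++ rev (rcons R r).
apply: (no_path_cover2 canS PS DS PD (N := N')).
- apply: (gpath_cat (d := u) _ (gpath_rev e_sym gR)).
    apply: (gpath_cat (d := u) _ (gpath_rev e_sym gG)).
      apply: (gpath_cat (d := u) gN).
        exact: (gpath_rev e_sym (gpath_prefix (PE : P = (l :: L) ++ _))).
      by rewrite last_rcons rev_rcons /= e_sym.
    by rewrite last_cat rev_rcons /= rev_cons last_rcons (lastI g G) rev_rcons.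
  by rewrite !last_cat rev_cons last_rcons rev_rcons.
- by apply/permP => q; rewrite /N' PE count_cat -(permP pN); count_arith.
Qed.

Lemma attached_neighbor_last l L a b M C s z : P = l :: L ++ a :: b :: M ->
  touches e S a C -> s \in S -> path_comp e s -> path_end s z -> e b z ->
  z = last z P.
Proof.
move=> PE aC sS ps zs bz; have /and3P[CS cC _] := aC.
have [y Cy ay] := touches_traversal aC.
have PC := path_comp_cycle_neq Ppath cC.
have [sP | sP] := eqVneq s P.
  move: zs; rewrite sP => /orP[/eqP zl | /eqP //].
  by case: (no_head_closure PE CS PC Cy ay); move: bz; rewrite zl {1}PE e_sym.
have uPCs : uniq [:: P; C; s].
  have sC := path_comp_cycle_neq ps cC.
  by rewrite /= !inE negb_or PC eq_sym sP /= andbT eq_sym.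
case: (no_double_attachment (PE : P = (l :: L) ++ _) CS sS uPCs Cy ay _ bz).
exact: (path_end_traversal e_sym canS sS zs).
Qed.

Lemma attached_neighbor_head L a b R r C s z : P = L ++ b :: a :: rcons R r ->
  touches e S a C -> s \in S -> path_comp e s -> path_end s z -> e b z ->
  z = head z P.
Proof.
move=> PE aC sS ps zs bz; have /and3P[CS cC _] := aC.
have [y Cy ay] := touches_traversal aC.
have PC := path_comp_cycle_neq Ppath cC.
have [sP | sP] := eqVneq s P.
  move: zs; rewrite sP => /orP[/eqP // | /eqP zr].
  case: (no_tail_closure PE CS PC Cy ay).
  by move: bz; rewrite zr {1}PE last_cat /= last_rcons.
have uPsC : uniq [:: P; s; C].
  have sC := path_comp_cycle_neq ps cC.
  by rewrite /= !inE negb_or PC eq_sym sP /= andbT.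
case: (no_double_attachment PE sS CS uPsC _ bz Cy ay).
exact: (path_end_traversal e_sym canS sS zs).
Qed.

Lemma V2_not_path_end x : V2 e S x -> path_end P x = false.
Proof. by case/andP=> /negP nV1 _; apply/negP => /(path_end_V1 PS Ppath). Qed.

Lemma no_gap L a G a' R : P = L ++ a :: G ++ a' :: R ->
  goes_to_cycle e S a -> goes_to_cycle e S a' -> G != [::] ->
  all (V2 e S) G -> ~~ has (goes_to_cycle e S) G -> False.
Proof.
move=> PE ga ga' + V2G ngcG.
have [C aC] := goes_to_cycle_touches ga.
have [C' a'C'] := goes_to_cycle_touches ga'.
case: L PE => [|l L] PE.
  by have := V2_not_path_end (goes_to_cycle_V2 ga); rewrite /path_end PE /= eqxx.
case/lastP: R PE => [|R r] PE.
  have := V2_not_path_end (goes_to_cycle_V2 ga').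
  by rewrite /path_end PE /= last_cat /= last_cat /= eqxx orbT.
case: G PE V2G ngcG => [//|b G] PE V2G ngcG _.
have endNeighbor x : x \in b :: G ->
    exists z s, [/\ s \in S, path_comp e s, path_end s z & e x z].
  move=> xG; apply: V2_path_end_neighbor; first exact: (allP V2G).
  by apply: contra ngcG => gx; apply/hasP; exists x.
have [z [s [sS ps zs bz]]] := endNeighbor b (mem_head _ _).
have [z' [s' [s'S ps' z's' b'z']]] := endNeighbor _ (mem_last b G).
have zr : z = r.
  rewrite (attached_neighbor_last PE aC sS ps zs bz) PE.
  by rewrite /= !last_cat /= last_cat /= last_rcons.
have z'l : z' = l.
  have PE' : P = (l :: L ++ a :: belast b G) ++ last b G :: a' :: rcons R r.
    by rewrite PE (lastI b G) cat_rcons /= -catA.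
  by rewrite (attached_neighbor_head PE' a'C' s'S ps' z's' b'z') PE.
have [y Cy ay] := touches_traversal aC; have /and3P[CS cC _] := aC.
have PE' : P = l :: L ++ a :: b :: G ++ rcons (a' :: R) r by rewrite PE.
apply: (no_double_closure PE' CS (path_comp_cycle_neq Ppath cC) Cy ay).
  by rewrite -z'l e_sym.
by rewrite -zr.
Qed.

Lemma goes_to_cycle_infix A Z B : P = A ++ Z ++ B -> all (V2 e S) Z ->
  exists2 Y, infix Y Z & Y =i [seq v <- Z | goes_to_cycle e S v].
Proof.
elim: Z A => [|z Z IHZ] A PE; first by exists [::].
case/andP=> _ V2Z.
have [|Y YZ memY] := IHZ (rcons A z) _ V2Z; first by rewrite PE cat_rcons.
have /andP[_ uZ] : (z \notin Z) && uniq Z.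
  rewrite -cons_uniq; apply: infix_uniq (canonical_comp_uniq canS PS).
  by apply/infixP; exists A, B.
have [gz | ngz] := boolP (goes_to_cycle e S z); last first.
  exists Y; first exact: infix_trans YZ (infix_cons _ _).
  by move=> v; rewrite /= (negbTE ngz) memY.
case: Y YZ memY => [|y Y] YZ memY.
  exists [:: z]; first by rewrite infix1s mem_head.
  by move=> v; rewrite /= gz inE [in RHS]inE -memY orbF.
case/infixP: YZ => [[|q Q] [R ZE]].
  exists [:: z, y & Y]; first by rewrite ZE -cat_cons prefix_infix.
  by move=> v; rewrite /= gz inE [in RHS]inE memY.
exfalso; apply: (@no_gap A z (q :: Q) y (Y ++ R ++ B) _ gz) => //.
- by rewrite PE ZE /= -catA /= -catA.
- by move: (mem_head y Y); rewrite memY mem_filter => /andP[].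
- by apply/allP => x xQ; apply: (allP V2Z); rewrite ZE mem_cat xQ.
- apply/hasP => -[x xQ gx]; move: uZ; rewrite ZE cat_uniq => /and3P[_ /hasP nhas _].
  by apply: nhas; exists x => //; rewrite mem_cat memY mem_filter gx ZE mem_cat xQ.
Qed.

Lemma touches_adjacent L u v R C C' : P = L ++ u :: v :: R ->
  touches e S u C -> touches e S v C' -> C = C'.
Proof.
move=> PE uC vC'; apply/eqP; apply: contraT => CC'.
have /and3P[CS cC _] := uC; have /and3P[C'S cC' _] := vC'.
have [y Cy uy] := touches_traversal uC; have [y' C'y' vy'] := touches_traversal vC'.
have uPCC' : uniq [:: P; C; C'].
  by rewrite /= !inE !negb_or CC' !(path_comp_cycle_neq Ppath).
by case: (no_double_attachment PE CS C'S uPCC' Cy uy C'y' vy').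
Qed.

Lemma infix_touches_unique Y : infix Y P -> 2 <= size Y ->
  {in Y, forall x, exists C, touches e S x C} ->
  exists C, forall x C', x \in Y -> touches e S x C' -> C' = C.
Proof.
elim: Y => [//|x [//|v Y] IHY] xvYP _ touchY.
have [L [R PE]] := infixP xvYP.
have [Cv vCv] : exists C, touches e S v C by apply: touchY; rewrite !inE eqxx orbT.
have [Cx xCx] := touchY x (mem_head _ _).
have xv D D' : touches e S x D -> touches e S v D' -> D = D'.
  exact: (touches_adjacent (PE : P = L ++ x :: v :: (Y ++ R))).
exists Cv => w C'; rewrite inE => /orP[/eqP-> xC' | wvY wC'].
  exact: xv xC' vCv.
case: Y IHY xvYP touchY wvY PE => [_ _ _ | z Y IHY xvYP touchY wvY PE].
  rewrite inE => /eqP wv _; rewrite wv in wC'.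
  by rewrite -(xv _ _ xCx wC') (xv _ _ xCx vCv).
have [//||D vzYD] := IHY (infix_trans (infix_cons _ _) xvYP).
  by move=> u uY; apply: touchY; rewrite inE uY orbT.
by rewrite (vzYD _ _ wvY wC') (vzYD _ _ (mem_head _ _) vCv).
Qed.

Lemma Xprime_infix X : infix X P || infix X (rev P) -> all (V2 e S) X ->
  exists2 Y, infix Y P & Y =i Xprime e S X.
Proof.
move=> XP V2X.
have [X' [X'P X'X V2X']] : exists X', [/\ infix X' P, X' =i X & all (V2 e S) X'].
  case/orP: XP => [XP | XrP]; first by exists X.
  by exists (rev X); rewrite all_rev infix_revLR; split=> // v; rewrite mem_rev.
have [A [B PE]] := infixP X'P.
have [Y YX' memY] := goes_to_cycle_infix PE V2X'.
exists Y => [|v]; first exact: infix_trans YX' X'P.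
by rewrite memY mem_filter mem_Xprime X'X andbC.
Qed.

Lemma goes_to_cycle_targets_in_one_comp Y : infix Y P -> 2 <= size Y ->
  all (goes_to_cycle e S) Y -> exists C, [/\ C \in S, cycle_comp e C &
    forall x y, x \in Y -> goes_to e S x y -> in_cycle_comp e S y -> y \in C].
Proof.
move=> YP Y2 gY.
have touchY : {in Y, forall x, exists C, touches e S x C}.
  by move=> x /(allP gY)/goes_to_cycle_touches.
have [C Cuniq] := infix_touches_unique YP Y2 touchY.
case: Y YP Y2 gY touchY Cuniq => [//|x0 Y] _ _ _ touchY Cuniq.
have [C0 x0C0] := touchY x0 (mem_head _ _).
have /and3P[CS cC _] : touches e S x0 C by rewrite -(Cuniq _ _ (mem_head _ _) x0C0).
exists C; split=> // x y xY /goes_to_touches/[apply]-[C' xC' yC'].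
by rewrite -(Cuniq _ _ xY xC').
Qed.

Lemma cycle_indices_nonadjacent L u v R C H y0 (a b : pred T) :
  P = L ++ u :: v :: R -> C \in S -> cycle_comp e C -> perm_eq H C -> cycle e H ->
  (forall y, a y -> e u y) -> (forall y, b y -> e v y) ->
  cyclic_nonadjacent (size H) [seq k <- iota 0 (size H) | a (nth y0 H k)]
                              [seq k <- iota 0 (size H) | b (nth y0 H k)].
Proof.
move=> PE CS cC pH cH au bv; have PC := path_comp_cycle_neq Ppath cC.
apply/allP => i; rewrite mem_filter mem_iota => /andP[ai /andP[_ iH]].
apply/allP => j; rewrite mem_filter mem_iota => /andP[bj /andP[_ jH]].
apply/andP; split; apply/eqP => ijE.
- have [gN hN lN] := cycle_cut y0 cH iH.
  apply: (no_insertion (d := y0) PE CS PC _ (gpath_rev e_sym gN)).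
  + by rewrite perm_rev perm_rot.
  + by rewrite head_rev lN; apply: au.
  + by rewrite last_rev hN ijE; apply: bv.
- have [gN hN lN] := cycle_cut y0 cH jH.
  apply: (no_insertion (d := y0) PE CS PC _ gN); first by rewrite perm_rot.
  + by rewrite hN ijE; apply: au.
  + by rewrite lN; apply: bv.
Qed.

Lemma balanced_cycle_count Y C : infix Y P -> 2 <= size Y ->
  all (goes_to_cycle e S) Y -> C \in S -> cycle_comp e C -> size C <= 6 ->
  (forall x y, x \in Y -> goes_to e S x y -> in_cycle_comp e S y -> y \in C) ->
  2 * (\sum_(x <- Y) count (balanced e S x) C) <= size Y * size C.
Proof.
move=> YP sizeY gY CS cC C6 YC; have /andP[C3 /hasP[H]] := cC.
rewrite mem_permutations => pH cH.
have sizeH : size C = size H by rewrite (perm_size pH).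
have /hasP[y0 _ _] : has predT C by rewrite has_predT (ltnW (ltnW C3)).
pose I x := [seq k <- iota 0 (size H) | balanced e S x (nth y0 H k)].
have countI x : count (balanced e S x) C = size (I x).
  by rewrite -(permP pH) -{1}(mkseq_nth y0 H) /mkseq count_map size_filter.
have I_neq0 x : x \in Y -> I x != [::].
  move=> xY; have /existsP[y /andP[xy yCyc]] := allP gY x xY.
  rewrite -size_eq0 -countI -lt0n -has_count; apply/hasP; exists y.
    exact: YC xY xy yCyc.
  by case/and3P: xy.
rewrite sizeH; apply: sum_adjacent_bound => // Y1 u v Y2 YE.
have [L [R PE]] : exists L R, P = L ++ u :: v :: R.
  by have [L [R ->]] := infixP YP; exists (L ++ Y1), (Y2 ++ R); rewrite YE -!catA.
have uY : u \in Y by rewrite YE mem_cat mem_head orbT.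
have vY : v \in Y by rewrite YE mem_cat !inE eqxx !orbT.
have subI x : I x \in sublists (iota 0 (size H)) by apply: filter_sublists.
have balE x y : balanced e S x y -> e x y by case/andP=> /and3P[].
have IuIv : cyclic_nonadjacent (size H) (I u) (I v).
  exact: cycle_indices_nonadjacent PE CS cC pH cH (balE u) (balE v).
have H36 : 3 <= size H <= 6 by rewrite -sizeH C3 C6.
rewrite !countI; apply/and3P.
exact: small_cycle_nonadjacent_bound H36 (subI u) (subI v) IuIv
                                     (I_neq0 u uY) (I_neq0 v vY).
Qed.

End PathComponent.

Theorem mainTheorem11 (T : finType) (e : rel T)
  (e_sym : symmetric e) (e_irr : irreflexive e)
  (reg6 : forall v : T, #|[set w | e v w]| = 6)
  (S : seq (seq T)) (canS : canonical e S)
  (P : seq T) (PS : P \in S) (Ppath : path_comp e P)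
  (X : seq T) (XP : infix X P || infix X (rev P)) (Xsize : 2 <= size X)
  (XV2b : all (V2b e S) X) :
  2 <= #|Xprime e S X| ->
  (exists Y : seq T, infix Y P /\ forall v : T, (v \in Y) = (v \in Xprime e S X)) /\
  (exists2 C : seq T, C \in S &
     [/\ cycle_comp e C,
         (forall x y : T, x \in Xprime e S X -> goes_to e S x y ->
            in_cycle_comp e S y -> y \in C)
       & (size C <= 6 ->
           2 * #|[set p : T * T | [&& p.1 \in Xprime e S X, p.2 \in C
                                   & balanced e S p.1 p.2]]|
             <= #|Xprime e S X| * size C)]).
Proof.
move=> X'2; have V2X : all (V2 e S) X by apply: sub_all XV2b => x /andP[].
have [Y YP YX'] := Xprime_infix e_sym canS PS Ppath XP V2X.
have uY : uniq Y := infix_uniq YP (canonical_comp_uniq canS PS).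
have sizeY : #|Xprime e S X| = size Y.
  by rewrite -(card_uniqP uY); apply: eq_card => v; rewrite YX'.
have gY : all (goes_to_cycle e S) Y.
  by apply/allP => x; rewrite YX' mem_Xprime => /andP[].
have Y2 : 2 <= size Y by rewrite -sizeY.
have [C [CS cC YC]] := goes_to_cycle_targets_in_one_comp e_sym canS PS Ppath YP Y2 gY.
split; first by exists Y.
exists C => //; split=> // [x y | C6]; first by rewrite -YX'; apply: YC.
have -> : #|[set p : T * T | [&& p.1 \in Xprime e S X, p.2 \in C
                                 & balanced e S p.1 p.2]]|
          = \sum_(x <- Y) count (balanced e S x) C.
  rewrite -(card_rel_pairs _ uY (canonical_comp_uniq canS CS)).
  by apply: eq_card => p; rewrite !inE YX' mem_Xprime.
rewrite sizeY; exact: (balanced_cycle_count e_sym canS PS Ppath YP Y2 gY CS cC C6 YC).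
Qed.
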